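(* Let $(G,\boldsymbol{\gamma})$ be a Ross graph. Let $e$ be either an edge $ij$ with $i\neq j$ carrying any color in $\mathbb{Z}/2\mathbb{Z}$, or a self-loop at any vertex $i$ carrying color $1$. Then the colored graph obtained from $(G,\boldsymbol{\gamma})$ by adding $e$ is a reflection-$(2,2)$ graph.
   Context: A colored graph $(G,\boldsymbol{\gamma})$ is a finite directed multigraph $G$ (self-loops and parallel edges allowed) with a color $\gamma_{ij}\in\mathbb{Z}/2\mathbb{Z}$ on each edge. $\rho:H_1(G,\mathbb{Z})\to\mathbb{Z}/2\mathbb{Z}$ sends a cycle to the sum of its edge colors; the $\rho$-image of a subgraph is the image of its cycles, trivial if $\{0\}$. For a subgraph $G'$: $n',m'$ are its numbers of vertices and edges, $c'$ (resp. $c'_0$) the number of its connected components with non-trivial (resp. trivial) $\rho$-image. With $n$ vertices and $m$ edges in $G$: $(G,\boldsymbol{\gamma})$ is a Ross graph if $m=2n-2$ and every subgraph satisfies $m'\le 2n'-2c'-3c'_0$; it is a reflection-$(2,2)$ graph if $m=2n-1$ and every subgraph satisfies $m'\le 2n'-c'-2c'_0$. *)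

From HB Require Import structures.
From mathcomp Require Import all_boot all_order all_algebra.
From mathcomp Require Import boolp.
Set Implicit Arguments. Unset Strict Implicit. Unset Printing Implicit Defensive.
Import GRing.Theory Num.Theory.

(* A colored graph: finite directed multigraph (self-loops and parallel edges
   allowed, edges are elements of a finite type) with colors in Z/2Z = bool
   (addition is addb). *)
Record cgraph := CGraph {
  vert : finType;
  edge : finType;
  esrc : edge -> vert;
  etgt : edge -> vert;
  ecol : edge -> bool }.

Section ColoredGraphs.
Variable G : cgraph.
Implicit Types F : {set edge G}.

(* A subgraph is given by its edge set F; its vertices are the endpoints
   of edges in F. *)
Definition vset F : {set vert G} :=
  [set v | [exists e in F, (esrc e == v) || (etgt e == v)]].

Definition adj F : rel (vert G) := fun u v =>
  [exists e in F, ((esrc e == u) && (etgt e == v)) || ((etgt e == u) && (esrc e == v))].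

Definition comps F : {set {set vert G}} :=
  [set [set v | connect (adj F) u v] | u in vset F].

Definition dtail (d : edge G * bool) : vert G := if d.2 then esrc d.1 else etgt d.1.
Definition dhead (d : edge G * bool) : vert G := if d.2 then etgt d.1 else esrc d.1.

Fixpoint is_walk F (x : vert G) (s : seq (edge G * bool)) (y : vert G) : bool :=
  match s with
  | [::] => x == y
  | d :: s' => [&& d.1 \in F, dtail d == x & is_walk F (dhead d) s' y]
  end.

Definition rho (s : seq (edge G * bool)) : bool :=
  foldr (fun d b => addb (ecol d.1) b) false s.

(* the rho-image of the component C of F is non-trivial: some cycle (closed
   walk) of F in C has rho-value 1 *)
Definition nontrivial_comp F (C : {set vert G}) : Prop :=
  exists x s, [/\ x \in C, is_walk F x s x & rho s = true].

Definition ncomp_nt F : nat := #|[set C in comps F | `[< nontrivial_comp F C >]]|.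
Definition ncomp_t F : nat := #|[set C in comps F | ~~ `[< nontrivial_comp F C >]]|.

Definition ross_graph : Prop :=
  (#|edge G|%:Z = 2 * #|vert G|%:Z - 2)%R /\
  forall F : {set edge G},
    (#|F|%:Z <= 2 * #|vset F|%:Z - 2 * (ncomp_nt F)%:Z - 3 * (ncomp_t F)%:Z)%R.

Definition refl22_graph : Prop :=
  (#|edge G|%:Z = 2 * #|vert G|%:Z - 1)%R /\
  forall F : {set edge G},
    (#|F|%:Z <= 2 * #|vset F|%:Z - (ncomp_nt F)%:Z - 2 * (ncomp_t F)%:Z)%R.

End ColoredGraphs.

(* G plus a new edge i -> j with color c (the new edge is None) *)
Definition add_edge (G : cgraph) (i j : vert G) (c : bool) : cgraph :=
  @CGraph (vert G) (option (edge G))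
    (fun o => if o is Some e then esrc e else i)
    (fun o => if o is Some e then etgt e else j)
    (fun o => if o is Some e then ecol e else c).

From mathcomp Require Import all_boot all_order all_algebra.
From mathcomp Require Import boolp zify.
Set Implicit Arguments. Unset Strict Implicit.

(* For a subgraph F of G + e, let F0 be its edges coming from G.  Passing
   from F0 to F adds |V(F)| - |V(F0)| vertices, so the total numbers of
   components satisfy c(F) + |V(F0)| <= c(F0) + |V(F)|, and a non-trivial
   cycle of F0 stays in F.  Substituting into the Ross bound for F0 gives the
   reflection-(2,2) bound for F with a margin of c'_0(F0) + c'(F), which is
   positive, and so pays for e, as soon as F0 is non-empty.  If F = {e}, the
   bound holds because e joins two distinct vertices or is a loop of color 1. *)

Lemma card_option_set (T : finType) (A : {set option T}) :
  #|A| = (None \in A) + #|[set x | Some x \in A]|.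
Proof.
rewrite (cardsD1 None A); congr (_ + _).
have -> : A :\ None = Some @: [set x | Some x \in A].
  apply/setP => [[x|]]; rewrite !inE /=.
    by apply/idP/imsetP => [Ax|[y + [->]]]; [exists x; rewrite ?inE | rewrite inE].
  by apply/esym/negbTE/imsetP; case.
by rewrite card_imset //; apply: Some_inj.
Qed.

Section Components.
Variable G : cgraph.
Implicit Types F : {set edge G}.

Lemma esrc_vset F e : e \in F -> esrc e \in vset F.
Proof. by move=> eF; rewrite inE; apply/existsP; exists e; rewrite eF eqxx. Qed.

Lemma etgt_vset F e : e \in F -> etgt e \in vset F.
Proof. by move=> eF; rewrite inE; apply/existsP; exists e; rewrite eF eqxx orbT. Qed.

Lemma ncomp_ntE F : ncomp_nt F + ncomp_t F = #|comps F|.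
Proof.
rewrite -(cardsID [set C | `[< nontrivial_comp F C >]] (comps F)).
by congr (_ + _); apply: eq_card => C; rewrite !inE andbC.
Qed.

Lemma card_comps_gt0 F : F != set0 -> 0 < #|comps F|.
Proof.
case/set0Pn=> e /esrc_vset eF; apply/card_gt0P.
by exists [set v | connect (adj F) (esrc e) v]; apply: imset_f.
Qed.

End Components.

Section AddEdge.
Variables (G : cgraph) (i j : vert G) (c : bool).
Local Notation G' := (add_edge i j c).
Variable F : {set edge G'}.

Definition old_edges : {set edge G} := [set e | Some e \in F].

Lemma mem_old_edges e : (e \in old_edges) = (Some e \in F).
Proof. by rewrite inE. Qed.

Definition lift_walk (s : seq (edge G * bool)) : seq (edge G' * bool) :=
  [seq (Some d.1, d.2) | d <- s].

Lemma vset_old_edges : vset old_edges \subset vset F.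
Proof.
apply/subsetP => v; rewrite !inE => /existsP [e /andP [eF ev]].
by apply/existsP; exists (Some e); rewrite -mem_old_edges eF.
Qed.

Lemma connect_old_edges u v : connect (adj old_edges) u v -> connect (adj F) u v.
Proof.
apply: connect_sub => {}u {}v /existsP [e /andP [eF ev]]; apply: connect1.
by apply/existsP; exists (Some e); rewrite -mem_old_edges eF.
Qed.

Lemma is_walk_lift x s y : is_walk old_edges x s y -> is_walk F x (lift_walk s) y.
Proof.
elim: s x => [|[e b] s IH] x //= /and3P [eF ex w].
by rewrite -mem_old_edges eF /dtail /dhead /=; case: b ex w => /= -> /IH.
Qed.

Lemma rho_lift s : rho (lift_walk s) = rho s.
Proof. by elim: s => //= d s ->. Qed.

Lemma ncomp_nt_old_edges : 0 < ncomp_nt old_edges -> 0 < ncomp_nt F.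
Proof.
case/card_gt0P => C; rewrite inE => /andP [_ /asboolP [x [s [_ w r]]]].
have xF : x \in vset F.
  case: s w r => // -[e b] s /= /and3P [eF /eqP <- _] _.
  apply: (subsetP vset_old_edges).
  by case: b; [apply: esrc_vset | apply: etgt_vset].
apply/card_gt0P; exists [set v | connect (adj F) x v].
rewrite inE imset_f //=; apply/asboolP; exists x, (lift_walk s).
by rewrite inE connect0 rho_lift; split=> //; apply: is_walk_lift.
Qed.

(* Components of F meeting vset old_edges are images of components of
   old_edges; each other component contains a vertex of F outside it. *)
Lemma card_comps_old_edges :
  #|comps F| + #|vset old_edges| <= #|comps old_edges| + #|vset F|.
Proof.
set A := vset old_edges; set B := vset F.
set cl := fun u => [set v | connect (adj old_edges) u v].
set cl' := fun u => [set v | connect (adj F) u v].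
have AB : A \subset B := vset_old_edges.
set grow := fun X : {set vert G} => [set v | [exists u in X, connect (adj F) u v]].
have grow_cl u : grow (cl u) = cl' u.
  apply/setP => v; rewrite !inE; apply/existsP/idP => [[w]|uv].
    by rewrite inE => /andP [/connect_old_edges uw]; apply: connect_trans.
  by exists u; rewrite inE connect0.
have compsA : #|cl' @: A| <= #|comps old_edges|.
  have -> : cl' @: A = grow @: comps old_edges.
    by rewrite -imset_comp; apply: eq_in_imset => u _ /=; rewrite grow_cl.
  exact: leq_imset_card.
have compsBA : #|cl' @: (B :\: A)| <= #|B| - #|A|.
  by apply: leq_trans (leq_imset_card _ _) _; rewrite cardsD (setIidPr AB).
have -> : comps F = cl' @: A :|: cl' @: (B :\: A).
  by rewrite -imsetU -{1}(setIidPr AB) setID.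
apply: leq_trans (leq_add (leq_card_setU _ _) (leqnn _)) _.
by rewrite -addnA leq_add // -(subnK (subset_leq_card AB)) leq_add2r.
Qed.

Hypothesis newF : None \in F.

Lemma ncomp_nt_new_loop : i = j -> c = true -> 0 < ncomp_nt F.
Proof.
move=> eij ct; apply/card_gt0P; exists [set v | connect (adj F) i v].
have iF : i \in vset F := esrc_vset newF.
rewrite inE imset_f //=; apply/asboolP; exists i, [:: (None, true)].
by rewrite inE connect0 /= newF /dtail /dhead /= eij eqxx /rho /= ct.
Qed.

Hypothesis old_edges0 : old_edges = set0.

Lemma vset_new_edge_only : vset F = [set i; j].
Proof.
apply/eqP; rewrite eqEsubset; apply/andP; split; last first.
  by apply/subsetP => v /set2P [] ->; [apply: (esrc_vset newF) | apply: (etgt_vset newF)].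
apply/subsetP => v; rewrite inE => /existsP [[e|] /andP [eF ev]].
  by have := in_set0 e; rewrite -old_edges0 inE eF.
by rewrite !inE; case/orP: ev => /eqP <-; rewrite eqxx ?orbT.
Qed.

Lemma card_comps_new_edge_only : #|comps F| = 1.
Proof.
set cl' := fun u => [set v | connect (adj F) u v].
have aij : adj F i j by apply/existsP; exists None; rewrite newF /= !eqxx.
have aji : adj F j i by apply/existsP; exists None; rewrite newF /= !eqxx orbT.
have clj : cl' j = cl' i.
  by apply/setP => v; rewrite !inE; apply/idP/idP; apply: connect_trans; apply: connect1.
have -> : comps F = [set cl' i].
  by rewrite /comps vset_new_edge_only imsetU1 imset_set1 -/(cl' j) clj setUid.
exact: cards1.
Qed.

End AddEdge.

Theorem proposition2 (G : cgraph) (i j : vert G) (c : bool) :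
  ross_graph G ->
  (i != j \/ (i = j /\ c = true)) ->
  refl22_graph (add_edge i j c).
Proof.
move=> [nedges ross] e_ok; split.
  by rewrite /= card_option; move: nedges; rewrite /=; lia.
move=> F; rewrite card_option_set -/(old_edges F).
have := ross (old_edges F); have := card_comps_old_edges F.
rewrite -!ncomp_ntE; case: (boolP (None \in F)) => [newF|_] /=; last by lia.
have [old0|] := eqVneq (old_edges F) set0; last first.
  move/card_comps_gt0; rewrite -ncomp_ntE.
  have := ncomp_nt_old_edges (F := F); lia.
rewrite old0 cards0 (vset_new_edge_only newF old0).
have := card_comps_new_edge_only newF old0; rewrite -ncomp_ntE.
case: e_ok => [ij|[ij ct]]; first by rewrite cards2 ij; lia.
by have := ncomp_nt_new_loop newF ij ct; rewrite ij setUid cards1; lia.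
Qed.
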